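(* Let $n\ge 1$, $0\le t$, $l\ge 0$ with $t+l\le n$, and let $C_1\subseteq\mathbb F_2^n$ be a linear code of dimension $t$. Let $C_2(X)$ be a random linear code of dimension $t+l$ with $C_1\subseteq C_2(X)\subseteq\mathbb F_2^n$, whose distribution satisfies: for every $x\in\mathbb F_2^n\setminus C_1$, $$\Pr_X[x\in C_2(X)]=\frac{2^{l+t}-2^t}{2^n-2^t}.$$ Then for every additive channel $W$ on $\mathbb F_2^n$ with noise distribution $P_W$, $$\mathbb E_X\big[1-P_W(\Gamma_{C_2(X)}+C_1)\big]\le \sum_{k=0}^n \tilde P_W(k)\, g(2^{l+t-n}\mid n,k).$$
   Context: For $x\in\mathbb F_2^n$, $|x|$ is its Hamming weight and $T_n^k=\{x\in\mathbb F_2^n:|x|=k\}$. $h(p)=-p\log_2p-(1-p)\log_2(1-p)$ is the binary entropy. An additive channel $W$ on $\mathbb F_2^n$ is one with $W(y|x)=P_W(y-x)$ for a probability distribution $P_W$ on $\mathbb F_2^n$; set $\tilde P_W(k)=P_W(T_n^k)$. For a linear code $C_2\subseteq\mathbb F_2^n$, $\Gamma_{C_2}\subseteq\mathbb F_2^n$ denotes a set of coset representatives of $\mathbb F_2^n/C_2$ obtained by choosing in each coset $[x]_2=x+C_2$ an element of minimum Hamming weight, i.e. $\Gamma([x]_2)=x+\operatorname{argmin}_{x_2\in C_2}|x+x_2|$ (ties broken arbitrarily); $\Gamma_{C_2}+C_1=\{\gamma+c:\gamma\in\Gamma_{C_2},c\in C_1\}$. The quantity $1-P_W(\Gamma_{C_2}+C_1)$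 is the error probability of transmitting $C_2/C_1$ with minimum-distance coset decoding. Define $g(x\mid n,k)=\min\{2^{nh(k/n)}x,1\}$ if $k\le\lfloor n/2\rfloor$ and $g(x\mid n,k)=1$ if $k>\lfloor n/2\rfloor$. *)

From HB Require Import structures.
From mathcomp Require Import all_boot all_order all_algebra.
From mathcomp Require Import reals exp.
Set Implicit Arguments. Unset Strict Implicit. Unset Printing Implicit Defensive.
Import Order.TTheory GRing.Theory Num.Theory.
Local Open Scope ring_scope.

(* F_2^n is modelled as row vectors 'rV['F_2]_n; linear codes are
   subspaces {vspace 'rV['F_2]_n}. *)
Notation vecF2 n := 'rV['F_2]_n.

Definition hwt (n : nat) (x : vecF2 n) : nat := #|[set i : 'I_n | x ord0 i != 0]|.

Definition Tnk (n k : nat) : {set vecF2 n} := [set x | hwt x == k].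

(* x * log2 x with the convention 0 log 0 = 0 *)
Definition xlog2 {R : realType} (x : R) : R :=
  if x == 0 then 0 else x * (ln x / ln 2).

Definition binent {R : realType} (p : R) : R := - xlog2 p - xlog2 (1 - p).

Definition gfun {R : realType} (x : R) (n k : nat) : R :=
  if (k <= n./2)%N
  then Num.min (2 `^ (n%:R * binent (k%:R / n%:R)) * x) 1
  else 1.

Definition probset {R : realType} (n : nat) (P : vecF2 n -> R) (S : {set vecF2 n}) : R :=
  \sum_(y in S) P y.

Definition Ptilde {R : realType} (n : nat) (P : vecF2 n -> R) (k : nat) : R :=
  probset P (Tnk n k).

Definition is_distr {R : realType} (T : finType) (P : T -> R) : Prop :=
  (forall x, 0 <= P x) /\ \sum_x P x = 1.

(* G is a set of minimum-weight coset representatives of F_2^n / C: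
   each coset x + C contains exactly one element of G, and each element
   of G has minimum Hamming weight within its coset (ties arbitrary). *)
Definition min_coset_reps (n : nat) (C : {vspace vecF2 n}) (G : {set vecF2 n}) : Prop :=
  (forall x : vecF2 n, #|[set y in G | (y - x) \in C]| = 1%N) /\
  (forall y, y \in G -> forall c, c \in C -> (hwt y <= hwt (y + c))%N).

Definition coset_sum (n : nat) (G : {set vecF2 n}) (C1 : {vspace vecF2 n}) : {set vecF2 n} :=
  [set x | [exists g in G, [exists c, (c \in C1) && (x == g + c)]]].

From HB Require Import structures.
From mathcomp Require Import all_boot all_order all_algebra.
From mathcomp Require Import reals sequences exp.
From mathcomp Require Import ring zify.
Set Implicit Arguments.
Unset Strict Implicit.
Unset Printing Implicit Defensive.

Import Order.TTheory GRing.Theory Num.Theory.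
Local Open Scope ring_scope.

(* If the noise e is decoded wrongly, the minimum-weight representative g of
   e + C2 is not in e + C1, so y := g - e is a word of C2 outside C1 with
   |e + y| <= |e|.  By the union bound over these y, each lying in C2 with
   probability (2^(l+t) - 2^t) / (2^n - 2^t) <= 2^(l+t-n), the error
   probability for e is at most 2^(l+t-n) times the volume of the Hamming ball
   of radius |e|.  For |e| <= n/2 that volume is at most 2^(n h(|e|/n)): with
   p = |e|/n every point of the ball has binomial weight
   p^|y| (1-p)^(n-|y|) >= p^|e| (1-p)^(n-|e|) = 2^(-n h(p)), and these weights
   sum to 1. *)

Lemma F2_cases (b : 'F_2) : b = 0 \/ b = 1.
Proof. by case: b => [[|[|m]]] // ?; [left | right]; apply/val_inj. Qed.

Lemma sum_F2 (R : nmodType) (f : 'F_2 -> R) : \sum_b f b = f 0 + f 1.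
Proof.
rewrite (bigD1 0) //= (bigD1 1) //= big1 ?addr0 // => b /andP[b1 b0].
by case: (F2_cases b) b1 b0 => ->; rewrite eqxx.
Qed.

Lemma hwt_le n (y : vecF2 n) : (hwt y <= n)%N.
Proof. by rewrite -[n in (_ <= n)%N]card_ord max_card. Qed.

Lemma prod_if_card (R : comNzRingType) n (c : pred 'I_n) (p q : R) :
  \prod_(j < n) (if c j then p else q) = p ^+ #|c| * q ^+ (n - #|c|).
Proof.
rewrite (bigID c) /=.
under eq_bigr => j hj do rewrite hj.
under [X in _ * X]eq_bigr => j hj do rewrite (negbTE hj).
rewrite !prodr_const; congr (_ * _ ^+ _).
have := cardC c; rewrite card_ord => Hc.
have -> : #|[pred j | ~~ c j]| = #|[predC c]| by apply: eq_card.
apply: (@addnI #|c|); rewrite Hc subnKC //.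
exact: leq_trans (leq_addr _ _) (eq_leq Hc).
Qed.

Lemma sum_hwt_weights (R : comNzRingType) n (p q : R) :
  \sum_(y : vecF2 n) p ^+ hwt y * q ^+ (n - hwt y) = (p + q) ^+ n.
Proof.
have weight_prod (y : vecF2 n) : p ^+ hwt y * q ^+ (n - hwt y) =
    \prod_(j < n) (if y ord0 j != 0 then p else q).
  rewrite prod_if_card; suff -> : hwt y = #|[pred j | y ord0 j != 0]| by [].
  by apply: eq_card => j; rewrite inE.
rewrite (eq_bigr _ (fun y _ => weight_prod y)).
rewrite (reindex (fun f : {ffun 'I_n -> 'F_2} => \row_j f j)) /=; last first.
  exists (fun y : vecF2 n => [ffun j => y ord0 j]) => f _.
    by apply/ffunP => j; rewrite ffunE mxE.
  by apply/rowP => j; rewrite mxE ffunE.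
under eq_bigr do under eq_bigr do rewrite mxE.
rewrite -(bigA_distr_bigA (fun _ (b : 'F_2) => if b != 0 then p else q)) /=.
rewrite (eq_bigr (fun _ => p + q)) ?prodr_const ?card_ord // => j _.
by rewrite sum_F2 /= addrC.
Qed.

Lemma ler_binomial_weight (R : realDomainType) (p q : R) n w k :
  0 <= p <= q -> (w <= k <= n)%N ->
  p ^+ k * q ^+ (n - k) <= p ^+ w * q ^+ (n - w).
Proof.
move=> /andP[p0 pq] /andP[wk kn].
have q0 : 0 <= q := le_trans p0 pq.
have -> : (n - w = (k - w) + (n - k))%N by lia.
rewrite -{1}(subnKC wk) !exprD -mulrA ler_wpM2l ?exprn_ge0 //.
by apply: ler_wpM2r; [exact: exprn_ge0 | rewrite lerXn2r ?nnegrE].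
Qed.

Lemma powR_binent_weight (R : realType) n k (p : R) :
  (k < n)%N -> p = k%:R / n%:R ->
  2 `^ (n%:R * binent p) * (p ^+ k * (1 - p) ^+ (n - k)) = 1.
Proof.
move=> kn p_def.
have n0 : (0 : R) < n%:R by rewrite ltr0n; lia.
have q0 : 0 < 1 - p by rewrite p_def subr_gt0 ltr_pdivrMr // mul1r ltr_nat.
have [k0|kpos] := posnP k.
  rewrite p_def k0 mul0r expr0 mul1r subr0 expr1n /binent /xlog2 eqxx subr0 oner_eq0.
  by rewrite ln1 !(mul0r, mulr0, subr0, oppr0, sub0r) powRr0 mulr1.
have p0 : 0 < p by rewrite p_def divr_gt0 // ltr0n.
rewrite /binent /xlog2 (gt_eqF p0) (gt_eqF q0) /powR pnatr_eq0 /=.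
have -> : p ^+ k = expR (k%:R * ln p) by rewrite expRM_natl lnK.
have -> : (1 - p) ^+ (n - k) = expR ((n - k)%:R * ln (1 - p)).
  by rewrite expRM_natl lnK.
rewrite -!expRD -[RHS]expR0; congr expR.
have ln2 : 0 < ln (2 : R) by rewrite ln_gt0 // ltr1n.
move: (ln p) (ln (1 - p)) (ln (2 : R)) ln2 => a b c c0.
rewrite natrB 1?ltnW // p_def; field.
by rewrite gt_eqF // gt_eqF.
Qed.

Definition hamming_ball n k : {set vecF2 n} := [set y | (hwt y <= k)%N].

Lemma card_hamming_ball_le (R : realType) n k : (0 < n)%N -> (k <= n./2)%N ->
  (#|hamming_ball n k|%:R : R) <= 2 `^ (n%:R * binent (k%:R / n%:R)).
Proof.
move=> n0; rewrite geq_half_double -addnn => k2n.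
have kn : (k < n)%N by lia.
set p : R := k%:R / n%:R; set m := p ^+ k * (1 - p) ^+ (n - k).
have p0 : 0 <= p by rewrite divr_ge0.
have pq : p <= 1 - p.
  by rewrite lerBrDl -mulrDl ler_pdivrMr ?ltr0n // mul1r -natrD ler_nat.
have q0 : 0 <= 1 - p by apply: le_trans pq.
have ball_mass : #|hamming_ball n k|%:R * m <= 1.
  have total : \sum_(y : vecF2 n) p ^+ hwt y * (1 - p) ^+ (n - hwt y) = 1.
    by rewrite sum_hwt_weights addrC subrK expr1n.
  rewrite -[X in _ <= X]total.
  rewrite mulr_natl -sumr_const [X in _ <= X](bigID (mem (hamming_ball n k))) /=.
  apply: ler_wpDr.
    by apply: sumr_ge0 => y _; rewrite mulr_ge0 ?exprn_ge0.
  apply: ler_sum => y; rewrite inE => yk.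
  by apply: ler_binomial_weight; rewrite ?p0 ?pq ?yk //= ltnW.
have entropy_weight := powR_binent_weight kn (erefl p); rewrite -/m in entropy_weight.
have -> : (#|hamming_ball n k|%:R : R) =
    2 `^ (n%:R * binent p) * (#|hamming_ball n k|%:R * m).
  by rewrite mulrCA entropy_weight mulr1.
by rewrite ler_piMr ?powR_ge0.
Qed.

Lemma ler_ratioB (R : realFieldType) (a b c : R) :
  0 <= c <= a -> a <= b -> 0 < b -> (a - c) / (b - c) <= a / b.
Proof.
move=> /andP[c0 ca] ab b0; have a0 := le_trans c0 ca.
have [bc|cb] := leP b c.
  (* then b = c, and the left-hand side is 0 since x / 0 = 0 *)
  have -> : b - c = 0 by apply/eqP; rewrite subr_eq0 eq_le bc (le_trans ca).
  by rewrite invr0 mulr0 divr_ge0 // ltW.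
rewrite ler_pdivrMr ?subr_gt0 // mulrBr divfK ?gt_eqF // lerD2l lerN2.
by rewrite ler_piMl // ler_pdivrMr // mul1r.
Qed.

Lemma decoding_error_witness n (C1 C2 : {vspace vecF2 n}) (G : {set vecF2 n}) e :
  min_coset_reps C2 G -> e \notin coset_sum G C1 ->
  exists2 y, y \in C2 & (y \notin C1) && (hwt (e + y) <= hwt e)%N.
Proof.
case=> unique_rep min_rep not_decoded.
have /cards1P [g Hg] : #|[set y in G | (y - e) \in C2]| == 1%N by rewrite unique_rep.
have : g \in [set y in G | (y - e) \in C2] by rewrite Hg set11.
rewrite inE => /andP [gG ge].
exists (g - e) => //; rewrite [e + _]addrC subrK; apply/andP; split.
- apply: contra not_decoded => geC1; rewrite inE.
  apply/existsP; exists g; rewrite gG /=.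
  apply/existsP; exists (e - g); rewrite -opprB memvN geC1 /=.
  by rewrite opprB addrCA subrr addr0.
- have := min_rep g gG (e - g); rewrite addrCA subrr addr0; apply.
  by rewrite -opprB memvN.
Qed.

Lemma one_sub_probset n (R : realType) (P : vecF2 n -> R) (S : {set vecF2 n}) :
  \sum_x P x = 1 -> 1 - probset P S = \sum_x P x * (x \notin S)%:R.
Proof.
move=> P1; rewrite -[in LHS]P1 /probset (bigID (mem S)) /= addrC addrK.
rewrite [RHS](bigID (mem S)) /= [in RHS]big1 => [|x xS]; last by rewrite xS mulr0.
by rewrite add0r; apply: eq_bigr => x xS; rewrite xS mulr1.
Qed.

Lemma sum_Ptilde_mul n (R : realType) (P : vecF2 n -> R) (f : nat -> R) :
  \sum_(k < n.+1) Ptilde P k * f k = \sum_x P x * f (hwt x).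
Proof.
rewrite /Ptilde /probset; under eq_bigr do rewrite mulr_suml big_mkcond.
rewrite exchange_big /=; apply: eq_bigr => x _.
have wx : (hwt x < n.+1)%N by rewrite ltnS hwt_le.
rewrite (bigD1 (Ordinal wx)) //= inE eqxx big1 ?addr0 // => k kx.
by rewrite inE; case: eqP => // xk; case/eqP: kx; apply/val_inj.
Qed.

Section RandomCosetCode.

Variables (R : realType) (n : nat) (C1 : {vspace vecF2 n}).
Variables (X : finType) (pX : X -> R).
Variables (C2 : X -> {vspace vecF2 n}) (Gam : X -> {set vecF2 n}) (rho : R).

Hypothesis pX_ge0 : forall i, 0 <= pX i.
Hypothesis pX_sum1 : \sum_i pX i = 1.
Hypothesis C2_uniform : forall y, y \notin C1 -> \sum_(i | y \in C2 i) pX i = rho.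
Hypothesis Gam_reps : forall i, min_coset_reps (C2 i) (Gam i).

Let decoding_error e i : R := (e \notin coset_sum (Gam i) C1)%:R.

Lemma expected_decoding_error_le1 e : \sum_i pX i * decoding_error e i <= 1.
Proof.
rewrite -pX_sum1; apply: ler_sum => i _.
by rewrite ler_piMr // /decoding_error; case: (_ \notin _).
Qed.

Lemma expected_decoding_error_le_card e :
  \sum_i pX i * decoding_error e i <=
  #|[set y | (y \notin C1) && (hwt (e + y) <= hwt e)%N]|%:R * rho.
Proof.
set B := [set y | _]; rewrite mulr_natl -sumr_const.
have -> : \sum_(y in B) rho = \sum_(y in B) \sum_i pX i * (y \in C2 i)%:R.
  apply: eq_bigr => y; rewrite inE => /andP[yC1 _].
  by rewrite -(C2_uniform yC1) big_mkcond; apply: eq_bigr => i _; rewrite mulr_natr mulrb.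
rewrite exchange_big /=; apply: ler_sum => i _; rewrite -mulr_sumr.
apply: ler_wpM2l => //; rewrite /decoding_error.
case: (boolP (_ \notin _)) => [not_decoded|_]; last by rewrite sumr_ge0.
have [y yC2 yB] := decoding_error_witness (Gam_reps i) not_decoded.
rewrite (bigD1 y) ?inE //= yC2 lerDl.
by apply: sumr_ge0 => z _; apply: ler0n.
Qed.

Lemma expected_decoding_error_le_gfun e x : (0 < n)%N -> 0 <= rho <= x ->
  \sum_i pX i * decoding_error e i <= gfun x n (hwt e).
Proof.
move=> n0 /andP[rho0 rhox]; rewrite /gfun; case: ifP => [small|_].
  rewrite le_min expected_decoding_error_le1 andbT.
  apply: le_trans (expected_decoding_error_le_card e) _.
  rewrite ler_pM ?ler0n //; apply: le_trans (card_hamming_ball_le R n0 small).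
  rewrite ler_nat -(card_imset _ (addrI e)); apply/subset_leq_card/subsetP => z.
  by case/imsetP=> y; rewrite !inE => /andP[_ ?] ->.
exact: expected_decoding_error_le1.
Qed.

End RandomCosetCode.

Theorem lemma1 (R : realType) (n t l : nat)
  (C1 : {vspace 'rV['F_2]_n})
  (X : finType) (pX : X -> R) (C2 : X -> {vspace 'rV['F_2]_n})
  (Gam : X -> {set 'rV['F_2]_n}) (PW : 'rV['F_2]_n -> R) :
  (1 <= n)%N -> (t + l <= n)%N ->
  \dim C1 = t ->
  is_distr pX ->
  (forall i, pX i != 0 -> (C1 <= C2 i)%VS /\ \dim (C2 i) = (t + l)%N) ->
  (forall x : 'rV['F_2]_n, x \notin C1 ->
     \sum_(i | x \in C2 i) pX i
     = (2 ^+ (l + t) - 2 ^+ t) / (2 ^+ n - 2 ^+ t)) ->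
  (forall i, min_coset_reps (C2 i) (Gam i)) ->
  is_distr PW ->
  \sum_i pX i * (1 - probset PW (coset_sum (Gam i) C1))
  <= \sum_(k < n.+1) Ptilde PW k * gfun (2 ^+ (l + t) / 2 ^+ n) n k.
Proof.
move=> n0 tln _ [pX_ge0 pX_sum1] _ C2_uniform Gam_reps [PW_ge0 PW_sum1].
have exp2_le m m' : (m <= m')%N -> (2 : R) ^+ m <= 2 ^+ m'.
  by move=> ?; rewrite ler_eXn2l ?ltr1n.
have rho_ge0 : (0 : R) <= (2 ^+ (l + t) - 2 ^+ t) / (2 ^+ n - 2 ^+ t).
  by rewrite divr_ge0 // subr_ge0 exp2_le //; lia.
have rho_le : (2 ^+ (l + t) - 2 ^+ t) / (2 ^+ n - 2 ^+ t) <= 2 ^+ (l + t) / 2 ^+ n :> R.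
  by apply: ler_ratioB; rewrite ?exprn_ge0 ?exprn_gt0 ?exp2_le //=; lia.
under eq_bigr do rewrite one_sub_probset // mulr_sumr.
rewrite exchange_big sum_Ptilde_mul /=; apply: ler_sum => e _.
under eq_bigr do rewrite mulrCA.
rewrite -mulr_sumr ler_wpM2l //.
apply: (expected_decoding_error_le_gfun pX_ge0 pX_sum1 C2_uniform Gam_reps) => //.
by rewrite rho_ge0.
Qed.
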